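(* Let $n>5$ be prime and let $\gamma$ be a probability distribution on $\mathbb{Z}_n$ with $\gamma(k)\in\mathbb{Q}$ for all $k$. Suppose $\hat{\gamma}(x)=\hat{\gamma}(y)$ for some $x,y\in\mathbb{Z}_n\setminus\{0\}$. Then $\gamma(kx^{-1}y)=\gamma(k)$ for all $k\in\mathbb{Z}_n$, where all operations are in the field $\mathbb{Z}_n$.
   Context: $\hat{\gamma}(x)=\sum_{k\in\mathbb{Z}_n}\omega_n^{kx}\gamma(k)$ with $\omega_n=e^{-2\pi i/n}$. *)

From HB Require Import structures.
From mathcomp Require Import all_boot all_order all_algebra.
From mathcomp Require Import complex.
From mathcomp Require Import reals trigo.
Set Implicit Arguments. Unset Strict Implicit. Unset Printing Implicit Defensive.
Import Order.TTheory GRing.Theory Num.Theory.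
Local Open Scope ring_scope.
Local Open Scope complex_scope.

(* omega_n = e^{-2 pi i / n} = cos(2 pi / n) - i sin(2 pi / n), in R[i] *)
Definition omega (R : realType) (n : nat) : R[i] :=
  (cos (2 * pi / n%:R))%:C - 'i * (sin (2 * pi / n%:R))%:C.

Definition fhat (R : realType) (n : nat) (gamma : 'Z_n -> rat) (x : 'Z_n) : R[i] :=
  \sum_(k : 'Z_n) omega R n ^+ (nat_of_ord (k * x)) * ratr (gamma k).

From mathcomp Require Import all_boot all_order all_algebra all_field.
From mathcomp Require Import complex reals trigo ring.
Import Order.TTheory GRing.Theory Num.Theory.
(* Write c_a(j) = gamma(j / a).  Substituting k = j / a in the Fourier sum gives
   hat gamma(a) = sum_j omega^j c_a(j), so the rational polynomial
   q = sum_j (c_x(j) - c_y(j)) X^j, of degree < n, vanishes at the primitive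
   n-th root of unity omega.  As n is prime, 1 + X + ... + X^(n-1) is
   irreducible over Q, hence divides q, and degrees force q to be a rational
   multiple of it.  But q(1) = sum c_x - sum c_y = 0 while that polynomial
   takes the value n at 1, so q = 0: gamma(j / x) = gamma(j / y) for all j. *)

Set Implicit Arguments. Unset Strict Implicit. Unset Printing Implicit Defensive.
Local Open Scope ring_scope.

Definition geom_poly (R : nzRingType) (n : nat) : {poly R} := \poly_(i < n) 1.

Lemma size_geom_poly (R : nzRingType) n : size (geom_poly R n) = n.
Proof. exact/size_poly_eq/oner_neq0. Qed.

Lemma map_geom_poly (R S : nzRingType) (f : {rmorphism R -> S}) n :
  map_poly f (geom_poly R n) = geom_poly S n.
Proof.
apply/polyP=> i; rewrite coef_map /geom_poly !coef_poly.
by case: ifP => _; [exact: rmorph1 | exact: rmorph0].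
Qed.

Lemma horner_geom_poly (R : nzRingType) n (x : R) :
  (geom_poly R n).[x] = \sum_(i < n) x ^+ i.
Proof. by rewrite horner_poly; apply: eq_bigr => i _; rewrite mul1r. Qed.

Lemma horner1_geom_poly (R : nzRingType) n : (geom_poly R n).[1] = n%:R.
Proof.
rewrite horner_geom_poly (eq_bigr (fun _ => 1)) => [|i _]; last exact: expr1n.
by rewrite sumr_const card_ord.
Qed.

Lemma root_geom_poly (R : idomainType) n (w : R) :
  w != 1 -> w ^+ n = 1 -> root (geom_poly R n) w.
Proof.
move=> w_neq1 wn; rewrite /root horner_geom_poly.
have : (w - 1) * \sum_(i < n) w ^+ i == 0 by rewrite -subrX1 wn subrr.
by rewrite mulf_eq0 subr_eq0 (negbTE w_neq1).
Qed.

Lemma geom_poly_irreducible p : prime p -> irreducible_poly (geom_poly rat p).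
Proof.
move=> p_pr; have p_gt0 := prime_gt0 p_pr.
have [z prim_z] := C_prim_root_exists p_gt0.
have z_neq1 : z != 1.
  apply: contraTneq (prime_gt1 p_pr) => z1.
  by have := prim_order_dvd prim_z 1; rewrite expr1 z1 eqxx dvdn1 => /eqP->.
have z_root : root (map_poly ratr (geom_poly rat p)) z.
  by rewrite map_geom_poly root_geom_poly ?prim_expr_order.
have geom_neq0 : geom_poly rat p != 0 by rewrite -size_poly_gt0 size_geom_poly.
apply/(subfx_irreducibleP z_root geom_neq0) => q qz q_neq0.
have [r [Dr _] min_r] := minCpolyP z.
have size_r : size r = p.
  rewrite -(size_map_poly (ratr : rat -> algC)) -Dr.
  by rewrite (minCpoly_cyclotomic prim_z) size_cyclotomic totient_prime // prednK.
by rewrite size_geom_poly -size_r dvdp_leq // -min_r.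
Qed.

Lemma dvdp_common_root (F : fieldType) (R : idomainType) (f : {rmorphism F -> R})
    (p q : {poly F}) (x : R) :
  irreducible_poly p -> root (map_poly f p) x -> root (map_poly f q) x -> p %| q.
Proof.
move=> p_irr px qx; apply/negPn.
rewrite -(irreducible_poly_coprime q p_irr) -(coprimep_map f).
by apply/negP => /coprimep_root /(_ px); rewrite -rootE qx.
Qed.

Lemma rat_poly_eq0_root_unity (F : numFieldType) p (w : F) (q : {poly rat}) :
    prime p -> w != 1 -> w ^+ p = 1 -> (size q <= p)%N ->
  root (map_poly ratr q) w -> q.[1] = 0 -> q = 0.
Proof.
move=> p_pr w_neq1 wp size_q qw q1.
have /dvdpP [r Dq] : geom_poly rat p %| q.
  apply: dvdp_common_root (geom_poly_irreducible p_pr) _ qw.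
  by rewrite map_geom_poly root_geom_poly.
have geom_neq0 : geom_poly rat p != 0.
  by rewrite -size_poly_gt0 size_geom_poly prime_gt0.
have size_r : (size r <= 1)%N.
  have [-> | r_neq0] := eqVneq r 0; first by rewrite size_poly0.
  move: size_q; rewrite Dq size_mul // (size_geom_poly rat p).
  rewrite -size_poly_gt0 in r_neq0.
  by case: (size r) r_neq0 => [|[|s]] //= _; rewrite addSn ltnNge leq_addl.
move: q1; rewrite Dq (size1_polyC size_r) hornerM hornerC horner1_geom_poly.
move/eqP; rewrite mulf_eq0 pnatr_eq0 gtn_eqF ?prime_gt0 // orbF => /eqP->.
by rewrite mul0r.
Qed.

Section RootOfUnity.
Local Open Scope complex_scope.
Variable R : realType.

Definition expNi (t : R) : R[i] := (cos t)%:C - 'i * (sin t)%:C.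

Lemma expNiE t : expNi t = (cos t +i* (- sin t))%C.
Proof.
by apply/eqP; rewrite eq_complex /=; apply/andP; split; apply/eqP; ring.
Qed.

Lemma expNiD s t : expNi s * expNi t = expNi (s + t).
Proof.
rewrite !expNiE cosD sinD; apply/eqP; rewrite eq_complex /=.
by apply/andP; split; apply/eqP; ring.
Qed.

Lemma expNiMn t k : expNi t ^+ k = expNi (t *+ k).
Proof.
elim: k => [|k IHk]; first by rewrite expr0 mulr0n expNiE cos0 sin0 oppr0.
by rewrite exprS IHk expNiD mulrS.
Qed.

Lemma omegaE n : omega R n = expNi (2 * pi / n%:R).
Proof. by []. Qed.

Lemma omega_expn n : (0 < n)%N -> omega R n ^+ n = 1.
Proof.
move=> n_gt0; rewrite omegaE expNiMn -[X in expNi X]mulr_natr.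
by rewrite divfK ?pnatr_eq0 -?lt0n // expNiE mulr_natl cos2pi sin2pi oppr0.
Qed.

Lemma omega_neq1 n : (2 < n)%N -> omega R n != 1.
Proof.
move=> n_gt2; have n_gt0 : (0 < n)%N by apply: ltn_trans n_gt2.
rewrite omegaE expNiE; apply/eqP => /(congr1 (@complex.Im _)) /=.
apply/eqP; rewrite oppr_eq0 gt_eqF // sin_gt0_pi //.
rewrite divr_gt0 ?mulr_gt0 ?pi_gt0 ?ltr0n //=.
by rewrite ltr_pdivrMr ?ltr0n // mulrC ltr_pM2l ?pi_gt0 ?ltr_nat.
Qed.

End RootOfUnity.

Lemma unitZp_prime p (a : 'Z_p) : prime p -> a != 0 -> a \is a GRing.unit.
Proof.
move=> p_pr a_neq0; have p_gt1 := prime_gt1 p_pr.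
rewrite -(natr_Zp a) unitZpE // prime_coprime // gtnNdvd //.
  by rewrite lt0n; apply: contra a_neq0 => /eqP a0; apply/eqP/val_inj.
by rewrite -[p in (_ < p)%N](Zp_cast p_gt1).
Qed.

Definition Zp_poly (R : nzRingType) n (c : 'Z_n -> R) : {poly R} :=
  \sum_(j : 'Z_n) c j *: 'X^j.

Lemma coef_Zp_poly (R : nzRingType) n (c : 'Z_n -> R) (j : 'Z_n) :
  (Zp_poly c)`_j = c j.
Proof.
rewrite coef_sum (bigD1 j) //= coefZ coefXn eqxx mulr1 big1 ?addr0 //.
move=> i i_neq_j.
by rewrite coefZ coefXn eq_sym (inj_eq val_inj) (negbTE i_neq_j) mulr0.
Qed.

Lemma size_Zp_poly (R : nzRingType) n (c : 'Z_n -> R) :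
  (1 < n)%N -> (size (Zp_poly c) <= n)%N.
Proof.
move=> n_gt1; apply: (leq_trans (size_sum _ _ _)); apply/bigmax_leqP => j _.
apply: (leq_trans (size_scale_leq _ _)); rewrite size_polyXn.
by rewrite -[n in (_ <= n)%N](Zp_cast n_gt1).
Qed.

Lemma map_Zp_poly (R S : nzRingType) (f : {rmorphism R -> S}) n (c : 'Z_n -> R) :
  map_poly f (Zp_poly c) = Zp_poly (f \o c).
Proof.
by rewrite rmorph_sum; apply: eq_bigr => j _; rewrite /= map_polyZ map_polyXn.
Qed.

Lemma horner_Zp_poly (R : comNzRingType) n (c : 'Z_n -> R) (x : R) :
  (Zp_poly c).[x] = \sum_(j : 'Z_n) x ^+ j * c j.
Proof.
by rewrite horner_sum; apply: eq_bigr => j _; rewrite hornerZ hornerXn mulrC.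
Qed.

Lemma sum_Zp_mulr (V : nmodType) n (F : 'Z_n -> V) (a : 'Z_n) :
  a \is a GRing.unit -> \sum_(j : 'Z_n) F (j * a) = \sum_(j : 'Z_n) F j.
Proof. by move=> a_unit; rewrite [RHS](reindex_inj (mulIr a_unit)). Qed.

Lemma horner1_Zp_poly (R : comNzRingType) n (c : 'Z_n -> R) :
  (Zp_poly c).[1] = \sum_(j : 'Z_n) c j.
Proof.
by rewrite horner_Zp_poly; apply: eq_bigr => j _; rewrite expr1n mul1r.
Qed.

Lemma fhat_Zp_poly (R : realType) n (gamma : 'Z_n -> rat) (a : 'Z_n) :
  a \is a GRing.unit ->
  fhat R gamma a = (map_poly ratr (Zp_poly (fun j => gamma (j / a)))).[omega R n].
Proof.
move=> a_unit; rewrite map_Zp_poly horner_Zp_poly /fhat.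
rewrite -(sum_Zp_mulr _ (_ : a^-1 \is a GRing.unit)) ?unitrV //.
by apply: eq_bigr => j _; rewrite divrK.
Qed.

Theorem lemma1 (R : realType) (n : nat) (n_prime : prime n) (n_gt5 : (5 < n)%N)
  (gamma : 'Z_n -> rat)
  (gamma_ge0 : forall k, 0 <= gamma k)
  (gamma_sum : \sum_(k : 'Z_n) gamma k = 1)
  (x y : 'Z_n) (hx : x != 0) (hy : y != 0)
  (hxy : fhat R gamma x = fhat R gamma y) :
  forall k : 'Z_n, gamma (k * x^-1 * y) = gamma k.
Proof.
move=> k; have n_gt1 := prime_gt1 n_prime.
have n_gt2 : (2 < n)%N by apply: ltn_trans n_gt5.
have x_unit := unitZp_prime n_prime hx; have y_unit := unitZp_prime n_prime hy.
pose q := Zp_poly (fun j => gamma (j / x)) - Zp_poly (fun j => gamma (j / y)).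
have q_eq0 : q = 0.
  apply: (rat_poly_eq0_root_unity n_prime (omega_neq1 R n_gt2)).
  - exact/omega_expn/prime_gt0.
  - by rewrite (leq_trans (size_polyD _ _)) // geq_max size_polyN !size_Zp_poly.
  - by rewrite /root rmorphB hornerD hornerN -!fhat_Zp_poly // hxy subrr.
  rewrite hornerD hornerN !horner1_Zp_poly.
  by rewrite !(sum_Zp_mulr gamma) ?unitrV // subrr.
have := coef_Zp_poly (fun j => gamma (j / x)) (k * y).
by rewrite (subr0_eq q_eq0) coef_Zp_poly mulrK // mulrAC.
Qed.
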